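(* Suppose Assumptions (A2) and (A3) below hold and $x$ is such that $\mathtt{P}_{N_p}^{\mathrm{H}}(x)$ has a feasible solution for the tubes $\mathsf{Z}_k^j=\{z\mid T(z-\hat{z}_k^j)\leq \alpha_k^j\mathbf{1}\}$, $(j,k)\in I_{N_r:N_p-1}$. Then $\mathtt{P}_{N_p}^{\mathrm{H}}(x^+)$ is feasible for all $x^+\in \mathrm{conv}(\{A_i x+B_i u\})\oplus\mathsf W,\,\forall i\in\Gamma_p$, if the control input applied to the system follows the control policy $u=v+K_{\mathrm{inv}}(x-z)$.
   Context: Consider the uncertain linear system $x^+=Ax+Bu+w$ with $(A,B)\in\mathrm{conv}(\{(A_i,B_i),\,i\in\Gamma_p\})$, $\Gamma_p=\{1,\dots,n_p\}$, $w\in\mathsf W$ (convex polytope containing the origin in its interior), polytopic constraints $x\in\mathbb X$, $u\in\mathbb U$. The disturbance set is split as $\mathsf W\subseteq\overline{\mathsf W}\oplus\underline{\mathsf W}$ with $\overline{\mathsf W}=\mathrm{conv}\{w_l,\,l\in\Gamma_{\overline w}\}$ (large) and $\underline{\mathsf W}$ (small). Nominal model $z^+=A_iz+B_iv+w$, $w\in\overline{\mathsf W}$; control $u=v+K_{\mathrm{inv}}(x-z)$; $\mathsf S$ satisfies $(A_i+B_iK_{\mathrm{inv}})\mathsf S\oplus\underline{\mathsf W}\subseteq\mathsf S$; tightened sets $\mathbb Z=\mathbb X\ominus\mathsf S=\{z\mid Fz\le\mathbf 1\}$, $\mathbb V=\mathbb U\ominus K_{\mathrm{inv}}\mathsf S=\{v\mid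 Gv\le\mathbf 1\}$. The tube-enhanced multi-stage MPC problem uses a scenario tree with nodes $z_k^j$ and inputs $v_k^j$ ($I_{k_1:k_2}$ = tree indices at stages $k_1,\dots,k_2$), branching $z_{k+1}^c=A_iz_k^j+B_iv_k^j+w_l$ for all $i,l$ up to the robust horizon $N_r$ with $z_k^j\in\mathbb Z$, $v_k^j\in\mathbb V$, root constraint $x\in\{z_0^1\}\oplus\mathsf S$, and beyond $N_r$ tubes under the policy $v_k^j+K_{\mathrm{pred}}z$. $\mathtt{P}^{\mathrm H}_{N_p}(x)$ is its convex ''homothetic tube'' implementation: tubes $\mathsf Z_k^j=\{z\mid T(z-\hat z_k^j)\le\alpha_k^j\mathbf 1\}=\hat z_k^j\oplus\alpha_k^j\mathrm{conv}\{\vee_1,\dots,\vee_{n_v}\}$ with fixed $T$ ($\{z\mid Tz\le\mathbf 1\}$ $\lambda$-contractive with vertices $\vee_r$) and decision variables $\hat z_k^j$, $\alpha_k^j\ge0$; set inclusions are replaced via Farkas' lemma with offline nonnegative matrices ($P_iT=T(A_i+B_iK_{\mathrm{pred}})$, $P_xT=F$, $P_uT=GK_{\mathrm{pred}}$), giving $P_i(\alpha_k^j\mathbf 1+T\hat z_k^j)+TB_iv_k^j+Tw_l\le T\hat z_{k+1}^j+\alpha_{k+1}^j\mathbf 1$, $P_x(\alpha_k^j\mathbf 1+T\hat z_k^j)\le\mathbf 1$, $Gv_k^j+P_u(\alpha_k^j\mathbf 1+T\hat z_k^j)\le\mathbf 1$, terminal $P_i(\alpha_{N_p}^j\mathbf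 1+T\hat z_{N_p}^j)+Tw_l\le T\hat z_{N_p}^j+\alpha_{N_p}^j\mathbf 1$, and continuity at $N_r$; the worst-case tube stage cost is bounded through the tube vertices by slack variables $\gamma_k^j$. (A2) $\mathsf S$ is a convex compact disturbance invariant polytope with $\mathsf S\subset\mathbb X$, $K_{\mathrm{inv}}\mathsf S\subset\mathbb U$ ($\mathsf S=\{0\}$ if $\underline{\mathsf W}=\{0\}$). (A3) $\mathbb Z_f\subseteq\mathbb X\ominus\mathsf S$ is a robust positively invariant polytope containing the origin for the nominal model with $K_f=K_{\mathrm{pred}}$, $K_f\mathbb Z_f\subseteq\mathbb U\ominus K_{\mathrm{inv}}\mathsf S$, and for all tubes $\mathsf Z\subseteq\mathbb Z_f$, $(A_i+B_iK_f)\mathsf Z\oplus\overline{\mathsf W}\subseteq\mathsf Z^+\subseteq\mathbb Z_f$ for all $i$. *)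

From HB Require Import structures.
From mathcomp Require Import all_boot all_order all_algebra.
Set Implicit Arguments. Unset Strict Implicit. Unset Printing Implicit Defensive.
Import Order.TTheory GRing.Theory Num.Theory.
Local Open Scope ring_scope.

Section Defs.
Variable R : realFieldType.

Definition mxle p r (M N : 'M[R]_(p, r)) : Prop := forall i j, M i j <= N i j.

Definition ones p : 'cV[R]_p := const_mx 1.

Definition subs n (P Q : 'cV[R]_n -> Prop) : Prop := forall x, P x -> Q x.

Definition msum n (P Q : 'cV[R]_n -> Prop) (x : 'cV[R]_n) : Prop :=
  exists a b, P a /\ Q b /\ x = a + b.

Definition convhull n k (w : 'I_k -> 'cV[R]_n) (x : 'cV[R]_n) : Prop :=
  exists mu : 'I_k -> R, (forall l, 0 <= mu l) /\ \sum_l mu l = 1 /\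
    x = \sum_l mu l *: w l.

Definition bounded n (P : 'cV[R]_n -> Prop) : Prop :=
  exists M : R, forall x, P x -> forall i, `|x i 0| <= M.

Definition polytope n (P : 'cV[R]_n -> Prop) : Prop :=
  bounded P /\
  exists (r : nat) (H : 'M[R]_(r, n)) (h : 'cV[R]_r), forall x, P x <-> mxle (H *m x) h.

Definition origin_interior n (P : 'cV[R]_n -> Prop) : Prop :=
  exists eps : R, 0 < eps /\ forall x : 'cV[R]_n, (forall i, `|x i 0| < eps) -> P x.

Definition tube n q (T : 'M[R]_(q, n)) (zh : 'cV[R]_n) (al : R) (z : 'cV[R]_n) : Prop :=
  mxle (T *m (z - zh)) (al *: ones q).

(* Problem data: n states, m inputs, np vertex models, nw vertices of Wbar,
   q rows of T, nF rows of F (Z = {z | F z <= 1}), nG rows of G (V = {v | G v <= 1}). *)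
Record mpc_data (n m np nw q nF nG : nat) := MpcData {
  Am : 'I_np -> 'M[R]_n;
  Bm : 'I_np -> 'M[R]_(n, m);
  wv : 'I_nw -> 'cV[R]_n;
  Kinv : 'M[R]_(m, n);
  Kpred : 'M[R]_(m, n);
  Sset : 'cV[R]_n -> Prop;
  Fm : 'M[R]_(nF, n);
  Gm : 'M[R]_(nG, m);
  Tm : 'M[R]_(q, n);
  Pm : 'I_np -> 'M[R]_q;
  Px : 'M[R]_(nF, q);
  Pu : 'M[R]_(nG, q);
  Nr : nat;
  Np : nat
}.

Definition label np nw := ('I_np * 'I_nw)%type.

(* Scenario-tree nodes at stage k <= Nr are the
   label sequences s of length k (the path of branches (i,l) from the root
   [::]); child of s along (i,l) is rcons s (i,l).  For each leaf s (size Nr),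
   tubes (zh s k, al s k) for Nr <= k <= Np and tube inputs vt s k,
   Nr <= k < Np.  Cost/slack variables gamma are omitted (always feasible). *)
Definition PH_cons n m np nw q nF nG (d : mpc_data n m np nw q nF nG)
  (x : 'cV[R]_n)
  (z : seq (label np nw) -> 'cV[R]_n) (v : seq (label np nw) -> 'cV[R]_m)
  (zh : seq (label np nw) -> nat -> 'cV[R]_n) (al : seq (label np nw) -> nat -> R)
  (vt : seq (label np nw) -> nat -> 'cV[R]_m) : Prop :=
  let T := Tm d in
  let tb s k := al s k *: ones q + T *m zh s k in
  Sset d (x - z [::]) /\
  (forall s, (size s < Nr d)%N -> forall i l,
      z (rcons s (i, l)) = Am d i *m z s + Bm d i *m v s + wv d l) /\
  (forall s, (size s <= Nr d)%N -> mxle (Fm d *m z s) (ones nF)) /\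
  (forall s, (size s < Nr d)%N -> mxle (Gm d *m v s) (ones nG)) /\
  (forall s, size s = Nr d ->
    (forall k, (Nr d <= k <= Np d)%N -> 0 <= al s k) /\
    tube T (zh s (Nr d)) (al s (Nr d)) (z s) /\
    (* tube dynamics, state and input constraints (Farkas form) *)
    (forall k, (Nr d <= k < Np d)%N ->
       (forall i l, mxle (Pm d i *m tb s k + T *m (Bm d i *m vt s k) + T *m wv d l)
                         (T *m zh s k.+1 + al s k.+1 *: ones q)) /\
       mxle (Px d *m tb s k) (ones nF) /\
       mxle (Gm d *m vt s k + Pu d *m tb s k) (ones nG)) /\
    (* terminal constraints: terminal tube RPI under K_f = K_pred (v = 0)
       and satisfying state/input constraints *)
    (forall i l, mxle (Pm d i *m tb s (Np d) + T *m wv d l)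
                      (T *m zh s (Np d) + al s (Np d) *: ones q)) /\
    mxle (Px d *m tb s (Np d)) (ones nF) /\
    mxle (Pu d *m tb s (Np d)) (ones nG)).

Definition PH_feasible n m np nw q nF nG (d : mpc_data n m np nw q nF nG)
  (x : 'cV[R]_n) : Prop :=
  exists z v zh al vt, @PH_cons n m np nw q nF nG d x z v zh al vt.

End Defs.
Arguments ones {R} p.

From HB Require Import structures.
From mathcomp Require Import all_boot all_order all_algebra.
From mathcomp Require Import lra zify.
Import Order.TTheory GRing.Theory Num.Theory.
Set Implicit Arguments. Unset Strict Implicit. Unset Printing Implicit Defensive.
Local Open Scope ring_scope.

(* Recursive feasibility by shifting and averaging.  Fix a vertex scenario
   y = (i, l) of the successor state.  The subtree of the old scenario tree
   rooted at the child y, prolonged at stage N_r by the successors of the old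
   leaves under the tube policy v + K_pred z, together with the old tubes
   shifted by one stage (the terminal tube being repeated, which its robust
   invariance allows), is feasible from A_i x + B_i u + w_l + w for w in the
   small disturbance set.  Its root constraint holds because the error x - z evolves under
   A_i + B_i K_inv and S is disturbance invariant.  All remaining constraints
   of P^H are linear in the decision variables and S is convex, so averaging
   these solutions with the convex weights representing x^+ gives a feasible
   solution from x^+. *)

Section MatrixOrder.
Variable R : realFieldType.

Lemma mxle_trans p r (M N K : 'M[R]_(p, r)) : mxle M N -> mxle N K -> mxle M K.
Proof. by move=> MN NK i j; apply: le_trans (MN i j) (NK i j). Qed.

Lemma mxleD p r (M1 N1 M2 N2 : 'M[R]_(p, r)) :
  mxle M1 N1 -> mxle M2 N2 -> mxle (M1 + M2) (N1 + N2).
Proof. by move=> le1 le2 i j; rewrite !mxE lerD. Qed.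

Lemma mxle_mul2l p r s (P : 'M[R]_(s, p)) (M N : 'M[R]_(p, r)) :
  (forall a b, 0 <= P a b) -> mxle M N -> mxle (P *m M) (P *m N).
Proof.
move=> P_ge0 MN i j; rewrite !mxE; apply: ler_sum => k _.
by apply: ler_wpM2l; [apply: P_ge0 | apply: MN].
Qed.

End MatrixOrder.

Section WeightedSum.
Variables (R : realFieldType) (I : finType) (c : I -> R).

Definition convex_weights := (forall i, 0 <= c i) /\ \sum_i c i = 1.

Definition wsum p r (f : I -> 'M[R]_(p, r)) := \sum_i c i *: f i.

Lemma eq_wsum p r (f g : I -> 'M[R]_(p, r)) : f =1 g -> wsum f = wsum g.
Proof. by move=> fg; apply: eq_bigr => i _; rewrite fg. Qed.

Lemma wsumD p r (f g : I -> 'M[R]_(p, r)) :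
  wsum (fun i => f i + g i) = wsum f + wsum g.
Proof. by rewrite /wsum -big_split; apply: eq_bigr => i _; rewrite scalerDr. Qed.

Lemma wsumB p r (f g : I -> 'M[R]_(p, r)) :
  wsum (fun i => f i - g i) = wsum f - wsum g.
Proof.
by rewrite /wsum -sumrN -big_split; apply: eq_bigr => i _; rewrite scalerBr.
Qed.

Lemma wsumMl p r s (M : 'M[R]_(s, p)) (f : I -> 'M[R]_(p, r)) :
  M *m wsum f = wsum (fun i => M *m f i).
Proof. by rewrite /wsum mulmx_sumr; apply: eq_bigr => i _; rewrite scalemxAr. Qed.

Lemma wsumZ p r (a : I -> R) (M : 'M[R]_(p, r)) :
  (\sum_i c i * a i) *: M = wsum (fun i => a i *: M).
Proof. by rewrite /wsum scaler_suml; apply: eq_bigr => i _; rewrite scalerA. Qed.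

Hypothesis c_weights : convex_weights.

Lemma wsum_const p r (M : 'M[R]_(p, r)) : wsum (fun => M) = M.
Proof. by rewrite /wsum -scaler_suml c_weights.2 scale1r. Qed.

Lemma mxle_wsum p r (f g : I -> 'M[R]_(p, r)) :
  (forall i, mxle (f i) (g i)) -> mxle (wsum f) (wsum g).
Proof.
move=> fg a b; rewrite !summxE; apply: ler_sum => i _; rewrite !mxE.
by apply: ler_wpM2l; [apply: c_weights.1 | apply: fg].
Qed.

Lemma mxle_wsum_const p r (f : I -> 'M[R]_(p, r)) M :
  (forall i, mxle (f i) M) -> mxle (wsum f) M.
Proof. by move=> fM; rewrite -(wsum_const M); apply: mxle_wsum. Qed.

Lemma polytope_wsum n (P : 'cV[R]_n -> Prop) (f : I -> 'cV[R]_n) :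
  polytope P -> (forall i, P (f i)) -> P (wsum f).
Proof.
case=> _ [k [H [h PE]]] Pf; apply/PE.
by rewrite wsumMl; apply: mxle_wsum_const => i; apply/PE.
Qed.

End WeightedSum.

Lemma convhullD (R : realFieldType) n k1 k2 (f : 'I_k1 -> 'cV[R]_n)
    (g : 'I_k2 -> 'cV[R]_n) a b :
  convhull f a -> convhull g b ->
  exists2 c : 'I_k1 * 'I_k2 -> R,
    convex_weights c & a + b = wsum c (fun y => f y.1 + g y.2).
Proof.
case=> [mu [mu_ge0 [mu1 ->]]] [nu [nu_ge0 [nu1 ->]]].
exists (fun y => mu y.1 * nu y.2).
  split=> [y|]; first exact: mulr_ge0.
  rewrite -(pair_bigA _ (fun i l => mu i * nu l)) /=.
  by under eq_bigr do rewrite -mulr_sumr nu1 mulr1.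
rewrite wsumD /wsum; congr (_ + _).
  rewrite -(pair_bigA _ (fun i l => (mu i * nu l) *: f i)) /=.
  by apply: eq_bigr => i _; rewrite -scaler_suml -mulr_sumr nu1 mulr1.
rewrite -(pair_bigA _ (fun i l => (mu i * nu l) *: g l)) /= exchange_big /=.
by apply: eq_bigr => l _; rewrite -scaler_suml -mulr_suml mu1 mul1r.
Qed.

Section Tube.
Variables (R : realFieldType) (n q : nat) (T : 'M[R]_(q, n)).

Lemma tubeE zh al z : tube T zh al z <-> mxle (T *m z) (al *: ones q + T *m zh).
Proof.
rewrite /tube /mxle mulmxBr.
by split=> le_z i j; move: (le_z i j); rewrite !mxE lerBlDr.
Qed.

Lemma tube_farkas p (P : 'M[R]_(p, q)) (C : 'M[R]_(p, n)) zh al z :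
  (forall a b, 0 <= P a b) -> P *m T = C -> tube T zh al z ->
  mxle (C *m z) (P *m (al *: ones q + T *m zh)).
Proof. by move=> P_ge0 <- /tubeE z_in; rewrite -mulmxA; apply: mxle_mul2l. Qed.

Lemma tube_step m (A : 'M[R]_n) (B : 'M[R]_(n, m)) (K : 'M[R]_(m, n))
    (P : 'M[R]_q) zh al z zh' al' u w :
  (forall a b, 0 <= P a b) -> P *m T = T *m (A + B *m K) -> tube T zh al z ->
  mxle (P *m (al *: ones q + T *m zh) + T *m (B *m u) + T *m w)
       (T *m zh' + al' *: ones q) ->
  tube T zh' al' (A *m z + B *m (u + K *m z) + w).
Proof.
move=> P_ge0 PT z_in step; apply/tubeE; rewrite [_ + T *m zh']addrC.
have -> : A *m z + B *m (u + K *m z) + w = (A + B *m K) *m z + B *m u + w.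
  by rewrite mulmxDl mulmxDr mulmxA addrA addrAC.
rewrite 2!mulmxDr mulmxA; apply: mxle_trans step.
by do 2!apply: mxleD => //; apply: tube_farkas z_in.
Qed.

End Tube.

Lemma feedback_error (R : realFieldType) n m (A : 'M[R]_n) (B : 'M[R]_(n, m))
    (K : 'M[R]_(m, n)) (x z0 w wu : 'cV[R]_n) v0 :
  A *m x + B *m (v0 + K *m (x - z0)) + w + wu - (A *m z0 + B *m v0 + w)
  = (A + B *m K) *m (x - z0) + wu.
Proof.
rewrite mulmxDl mulmxDr mulmxA !mulmxBr.
by apply/matrixP => i j; rewrite !mxE; lra.
Qed.

Section Shift.
Variables (R : realFieldType) (n m np nw q nF nG : nat).
Variable d : mpc_data R n m np nw q nF nG.
Local Notation A := (Am d).
Local Notation B := (Bm d).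
Local Notation T := (Tm d).
Local Notation K := (Kpred d).
Local Notation tb al zh t k := (al t k *: ones q + T *m zh t k).

Hypotheses (Nr_gt0 : (0 < Nr d)%N) (Nr_lt_Np : (Nr d < Np d)%N).
Hypotheses (Pm_ge0 : forall i a b, 0 <= Pm d i a b)
  (PmT : forall i, Pm d i *m T = T *m (A i + B i *m K)).
Hypotheses (Px_ge0 : forall a b, 0 <= Px d a b) (PxT : Px d *m T = Fm d).
Hypotheses (Pu_ge0 : forall a b, 0 <= Pu d a b) (PuT : Pu d *m T = Gm d *m K).

Variables (x : 'cV[R]_n) (z : seq (label np nw) -> 'cV[R]_n)
  (v : seq (label np nw) -> 'cV[R]_m) (zh : seq (label np nw) -> nat -> 'cV[R]_n)
  (al : seq (label np nw) -> nat -> R) (vt : seq (label np nw) -> nat -> 'cV[R]_m).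
Hypothesis sol : PH_cons d x z v zh al vt.

Definition succ_stage k := minn k.+1 (Np d).

Lemma succ_stage_lt k : (k < Np d)%N -> succ_stage k = k.+1.
Proof. by move=> lt_k; apply/minn_idPl. Qed.

Lemma succ_stage_Np : succ_stage (Np d) = Np d.
Proof. exact/minn_idPr/leqnSn. Qed.

Definition succ_vt t k := if (k.+1 < Np d)%N then vt t k.+1 else 0.

Lemma leaf_succ_cons t k : size t = Nr d -> (Nr d <= k < Np d)%N ->
  [/\ forall i l, mxle (Pm d i *m tb al zh t (succ_stage k)
                        + T *m (B i *m succ_vt t k) + T *m wv d l)
                       (T *m zh t (succ_stage k.+1) + al t (succ_stage k.+1) *: ones q),
      mxle (Px d *m tb al zh t (succ_stage k)) (ones nF) &
      mxle (Gm d *m succ_vt t k + Pu d *m tb al zh t (succ_stage k)) (ones nG)].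
Proof.
move=> t_leaf /andP[Nr_le_k k_lt_Np].
have [_ [_ [_ [_ leaf]]]] := sol.
have [_ [_ [tube_cons [term [term_x term_u]]]]] := leaf t t_leaf.
rewrite /succ_vt (succ_stage_lt k_lt_Np); case: ltnP => [k1_lt_Np | Np_le_k1].
  rewrite (succ_stage_lt k1_lt_Np).
  have [] := tube_cons k.+1; first by rewrite k1_lt_Np andbT (leq_trans Nr_le_k).
  by move=> k1_dyn [k1_x k1_u]; split.
have Np_eq : k.+1 = Np d by apply/eqP; rewrite eqn_leq k_lt_Np Np_le_k1.
have -> : succ_stage k.+1 = Np d by apply/minn_idPr; rewrite -Np_eq.
rewrite Np_eq.
by split=> [i l||]; rewrite ?mulmx0 ?addr0 ?add0r.
Qed.

Variable y : label np nw.

Definition shift_v s :=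
  if (size s < (Nr d).-1)%N then v (y :: s)
  else vt (y :: s) (Nr d) + K *m z (y :: s).

Definition shift_z s :=
  if (size s < Nr d)%N then z (y :: s)
  else let: (i, l) := last y s in
       A i *m z (belast y s) + B i *m (vt (belast y s) (Nr d) + K *m z (belast y s))
       + wv d l.

Definition shift_zh s k := zh (belast y s) (succ_stage k).
Definition shift_al s k := al (belast y s) (succ_stage k).
Definition shift_vt s k := succ_vt (belast y s) k.

Lemma shift_leaf_tube s : size s = Nr d ->
  tube T (zh (belast y s) (Nr d).+1) (al (belast y s) (Nr d).+1) (shift_z s).
Proof.
move=> s_leaf; have t_leaf : size (belast y s) = Nr d by rewrite size_belast.
have [_ [_ [_ [_ leaf]]]] := sol.
have [_ [cont [tube_cons _]]] := leaf _ t_leaf.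
rewrite /shift_z s_leaf ltnn; case: (last y s) => i l.
apply: tube_step (Pm_ge0 i) (PmT i) cont _.
by have [] := tube_cons (Nr d); rewrite ?leqnn.
Qed.

Lemma PH_cons_shift wu :
  Sset d ((A y.1 + B y.1 *m Kinv d) *m (x - z [::]) + wu) ->
  PH_cons d (A y.1 *m x + B y.1 *m (v [::] + Kinv d *m (x - z [::])) + wv d y.2 + wu)
    shift_z shift_v shift_zh shift_al shift_vt.
Proof.
move=> S_err; have [_ [dyn [state [input leaf]]]] := sol.
have Nr_range : (Nr d <= Nr d < Np d)%N by rewrite leqnn.
split; [|split; [|split; [|split]]].
- rewrite /shift_z Nr_gt0.
  have := dyn [::] Nr_gt0 y.1 y.2; rewrite -surjective_pairing => ->.
  by rewrite feedback_error.
- move=> s s_lt i l; rewrite /shift_z /shift_v size_rcons.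
  have [s1_lt | s1_ge] := ltnP (size s).+1 (Nr d).
    have s_lt' : (size s < (Nr d).-1)%N by lia.
    by rewrite (ltnW s1_lt) s_lt' -rcons_cons; apply: dyn.
  have s_ge' : ((Nr d).-1 <= size s)%N by lia.
  by rewrite s_lt ltnNge s_ge' /= last_rcons belast_rcons.
- move=> s s_le; have [s_lt | s_ge] := ltnP (size s) (Nr d).
    by rewrite /shift_z s_lt; apply: state.
  have s_leaf : size s = Nr d by apply/eqP; rewrite eqn_leq s_le s_ge.
  have t_leaf : size (belast y s) = Nr d by rewrite size_belast.
  apply: mxle_trans (tube_farkas Px_ge0 PxT (shift_leaf_tube s_leaf)) _.
  have [_ + _] := leaf_succ_cons t_leaf Nr_range.
  by rewrite succ_stage_lt.
- move=> s s_lt; rewrite /shift_v; have [s_lt' | s_ge] := ltnP (size s) (Nr d).-1.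
    by apply: input => /=; lia.
  have t_leaf : size (y :: s) = Nr d by rewrite /=; lia.
  have [_ [cont [tube_cons _]]] := leaf _ t_leaf.
  have [_ [_ input_Nr]] := tube_cons _ Nr_range.
  rewrite mulmxDr mulmxA; apply: mxle_trans input_Nr.
  exact/mxleD/(tube_farkas Pu_ge0 PuT cont).
- move=> s s_leaf; have t_leaf : size (belast y s) = Nr d by rewrite size_belast.
  have [al_ge0 [_ [_ [term [term_x term_u]]]]] := leaf _ t_leaf.
  rewrite /shift_zh /shift_al succ_stage_Np (succ_stage_lt Nr_lt_Np).
  split; [|split; [|split]] => //.
  + by move=> k k_range; apply: al_ge0; rewrite /succ_stage; lia.
  + exact: shift_leaf_tube.
  + by move=> k /(leaf_succ_cons t_leaf) [dyn_k state_k input_k]; split.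
Qed.

End Shift.

Section Average.
Variables (R : realFieldType) (n m np nw q nF nG : nat).
Variable d : mpc_data R n m np nw q nF nG.
Variables (I : finType) (c : I -> R).
Hypotheses (c_weights : convex_weights c) (S_polytope : polytope (Sset d)).

Variables (xs : I -> 'cV[R]_n) (zs : I -> seq (label np nw) -> 'cV[R]_n)
  (vs : I -> seq (label np nw) -> 'cV[R]_m)
  (zhs : I -> seq (label np nw) -> nat -> 'cV[R]_n)
  (als : I -> seq (label np nw) -> nat -> R)
  (vts : I -> seq (label np nw) -> nat -> 'cV[R]_m).
Hypothesis sols : forall i, PH_cons d (xs i) (zs i) (vs i) (zhs i) (als i) (vts i).

Lemma PH_cons_wsum :
  PH_cons d (wsum c xs) (fun s => wsum c (zs^~ s)) (fun s => wsum c (vs^~ s))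
    (fun s k => wsum c (fun i => zhs i s k)) (fun s k => \sum_i c i * als i s k)
    (fun s k => wsum c (fun i => vts i s k)).
Proof.
have as_wsum M := esym (wsum_const c_weights M).
split; [|split; [|split; [|split]]].
- by rewrite -wsumB; apply: polytope_wsum => // i; have [] := sols i.
- move=> s s_lt i l; rewrite [wv d l]as_wsum !wsumMl -!wsumD.
  by apply: eq_wsum => j; have [_ [dyn _]] := sols j; apply: dyn.
- move=> s s_le; rewrite wsumMl; apply: mxle_wsum_const => // j.
  by have [_ [_ [state _]]] := sols j; apply: state.
- move=> s s_lt; rewrite wsumMl; apply: mxle_wsum_const => // j.
  by have [_ [_ [_ [input _]]]] := sols j; apply: input.
move=> s s_leaf; have leaf j := (sols j).2.2.2.2 s s_leaf.
split; [|split; [|split; [|split; [|split]]]].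
- move=> k k_range; apply: sumr_ge0 => j _; apply: mulr_ge0; first exact: c_weights.1.
  by have [+ _] := leaf j; apply.
- apply/tubeE; rewrite wsumZ !wsumMl -wsumD; apply: mxle_wsum => // j.
  by have [_ [/tubeE + _]] := leaf j.
- move=> k k_range; split; [move=> i l | split].
  + rewrite [X in _ + X]as_wsum !wsumZ !wsumMl -!wsumD !wsumMl -!wsumD.
    apply: mxle_wsum => // j; have [_ [_ [+ _]]] := leaf j.
    by move=> /(_ k k_range) [+ _]; apply.
  + rewrite [ones nF]as_wsum wsumZ !wsumMl -wsumD wsumMl.
    apply: mxle_wsum => // j; have [_ [_ [+ _]]] := leaf j.
    by move=> /(_ k k_range) [_ []].
  + rewrite [ones nG]as_wsum wsumZ !wsumMl -!wsumD !wsumMl -wsumD.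
    apply: mxle_wsum => // j; have [_ [_ [+ _]]] := leaf j.
    by move=> /(_ k k_range) [_ []].
- move=> i l; rewrite [X in _ + X]as_wsum !wsumZ !wsumMl -!wsumD !wsumMl -!wsumD.
  by apply: mxle_wsum => // j; have [_ [_ [_ [+ _]]]] := leaf j; apply.
- rewrite [ones nF]as_wsum wsumZ !wsumMl -wsumD wsumMl.
  by apply: mxle_wsum => // j; have [_ [_ [_ [_ []]]]] := leaf j.
- rewrite [ones nG]as_wsum wsumZ !wsumMl -wsumD wsumMl.
  by apply: mxle_wsum => // j; have [_ [_ [_ [_ []]]]] := leaf j.
Qed.

End Average.

Theorem corollary2 (R : realFieldType) (n m np nw q nF nG : nat)
  (d : mpc_data R n m np nw q nF nG)
  (X : 'cV[R]_n -> Prop) (U : 'cV[R]_m -> Prop)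
  (W Wund Zf : 'cV[R]_n -> Prop) :
  let A := Am d in let B := Bm d in let S := Sset d in
  let T := Tm d in let Wbar := convhull (wv d) in
  (* horizons: branching stages followed by tube stages *)
  (0 < Nr d < Np d)%N ->
  (* constraint and disturbance sets *)
  polytope X -> polytope U ->
  polytope W -> origin_interior W ->
  subs W (msum Wbar Wund) ->
  (* tube shape {z | T z <= 1}: a bounded polytope *)
  bounded (fun z => mxle (T *m z) (ones q)) ->
  (* disturbance invariance of S *)
  (forall i s w, S s -> Wund w -> S ((A i + B i *m Kinv d) *m s + w)) ->
  (* tightened sets Z = X (-) S = {F z <= 1}, V = U (-) Kinv S = {G v <= 1} *)
  (forall z, mxle (Fm d *m z) (ones nF) <-> (forall s, S s -> X (z + s))) ->
  (forall u, mxle (Gm d *m u) (ones nG) <-> (forall s, S s -> U (u + Kinv d *m s))) ->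
  (* offline Farkas matrices *)
  (forall i a b, 0 <= Pm d i a b) ->
  (forall i, Pm d i *m T = T *m (A i + B i *m Kpred d)) ->
  (forall a b, 0 <= Px d a b) -> Px d *m T = Fm d ->
  (forall a b, 0 <= Pu d a b) -> Pu d *m T = Gm d *m Kpred d ->
  (* (A2) *)
  polytope S -> subs S X -> subs (fun u => exists s, S s /\ u = Kinv d *m s) U ->
  ((forall w, Wund w <-> w = 0) -> (forall s, S s <-> s = 0)) ->
  (* (A3) *)
  polytope Zf -> Zf 0 ->
  subs Zf (fun z => mxle (Fm d *m z) (ones nF)) ->
  (forall z i w, Zf z -> Wbar w -> Zf ((A i + B i *m Kpred d) *m z + w)) ->
  (forall z, Zf z -> mxle (Gm d *m (Kpred d *m z)) (ones nG)) ->
  (forall zh al, 0 <= al -> subs (tube T zh al) Zf ->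
     exists zh' al', 0 <= al' /\
       (forall i z w, tube T zh al z -> Wbar w ->
          tube T zh' al' ((A i + B i *m Kpred d) *m z + w)) /\
       subs (tube T zh' al') Zf) ->
  (* recursive feasibility *)
  forall (x : 'cV[R]_n) z v zh al vt,
  PH_cons d x z v zh al vt ->
  let u := v [::] + Kinv d *m (x - z [::]) in
  forall xp : 'cV[R]_n,
  msum (convhull (fun i => A i *m x + B i *m u)) W xp ->
  PH_feasible d xp.
Proof.
(* (A3) and the descriptions of X, U, W and of the tube shape are not needed:
   the Farkas constraints of P^H already encode the inclusions they provide. *)
move=> A B S T Wbar /andP[Nr_gt0 Nr_lt_Np] _ _ _ _ W_split _ S_inv _ _
  Pm_ge0 PmT Px_ge0 PxT Pu_ge0 PuT S_polytope _ _ _ _ _ _ _ _ _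
  x z v zh al vt sol u xp [a [b [a_hull [Wb ->]]]].
subst A B S T Wbar u.
have [wb [wu [wb_hull [Wund_wu ->]]]] := W_split b Wb.
have [c c_weights ab_eq] := convhullD a_hull wb_hull.
rewrite addrA ab_eq -[wu](wsum_const c_weights) -wsumD.
do 5 eexists; apply: PH_cons_wsum => // y.
apply: (PH_cons_shift Nr_gt0 Nr_lt_Np Pm_ge0 PmT Px_ge0 PxT Pu_ge0 PuT sol).
by apply: S_inv => //; case: sol.
Qed.
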